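(* Let $\mathcal{X}$ be a non-degenerate fuzzy random variable with values in $\mathcal{F}_c(\mathbb{R})$ such that the real random variable $s_{\mathcal{X}}(u,\alpha)$ has a unique median for each $u\in\{-1,1\}$ and $\alpha\in[0,1]$. Then $\mathrm{Med}_s(\mathcal{X})=\mathrm{Med}(\mathcal{X};D_{FP})=\{\mathrm{med}_{Si}(\mathcal{X})\}=\{\mathrm{med}_{Gr}(\mathcal{X})\}$.
   Context: $\mathcal{F}_c(\mathbb{R})$ is the set of functions $A:\mathbb{R}\to[0,1]$ whose $\alpha$-levels $A_\alpha=\{x:A(x)\ge\alpha\}$ ($\alpha\in(0,1]$) and $A_0=\overline{\{x:A(x)>0\}}$ are non-empty compact intervals. Support function: $s_A(u,\alpha)=\sup\{uv:v\in A_\alpha\}$, $u\in\{-1,1\}$, $\alpha\in[0,1]$. A fuzzy random variable on $(\Omega,\mathcal{A},\mathbb{P})$ is a map $\mathcal{X}:\Omega\to\mathcal{F}_c(\mathbb{R})$ with each $\omega\mapsto\mathcal{X}(\omega)_\alpha$ a random compact set; $s_{\mathcal{X}}(u,\alpha)(\omega)=s_{\mathcal{X}(\omega)}(u,\alpha)$. Non-degenerate means not almost surely equal to a constant element of $\mathcal{F}_c(\mathbb{R})$. For a real random variable $X$, $\mathrm{Med}(X)=[\underline{\mathrm{med}}(X),\overline{\mathrm{med}}(X)]$ is its set of medians, $\mathrm{med}(X)$ its midpoint, $\mathrm{MAD}(X)=\mathrm{med}(|X-\mathrm{med}(X)|)$. $\mathrm{med}_{Si}(\mathcal{X})$ is the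 element of $\mathcal{F}_c(\mathbb{R})$ with $s_{\mathrm{med}_{Si}(\mathcal{X})}(u,\alpha)=\mathrm{med}(s_{\mathcal{X}}(u,\alpha))$ for all $u,\alpha$. $\mathrm{med}_{Gr}(\mathcal{X})$ (Grzegorzewski median) is the fuzzy number with membership $\mathrm{med}_{Gr}(\mathcal{X})(t)=\sup\{\inf_{\omega}\mathcal{X}(\omega)(X(\omega)): X:\Omega\to\mathbb{R}\text{ Borel measurable},\ t\in\mathrm{Med}(X)\}$; equivalently $(\mathrm{med}_{Gr}(\mathcal{X}))_\alpha=[\underline{\mathrm{med}}(\inf\mathcal{X}_\alpha),\overline{\mathrm{med}}(\sup\mathcal{X}_\alpha)]$ for all $\alpha$. $\mathrm{Med}_s(\mathcal{X})$ is the set of $A\in\mathcal{F}_c(\mathbb{R})$ with $s_A(u,\alpha)\in\mathrm{Med}(s_{\mathcal{X}}(u,\alpha))$ for all $u,\alpha$. $D_{FP}(A;\mathcal{X})=(1+O(A;\mathcal{X}))^{-1}$ with $O(A;\mathcal{X})=\sup_{(u,\alpha)}\frac{|s_A(u,\alpha)-\mathrm{med}(s_{\mathcal{X}}(u,\alpha))|}{\mathrm{MAD}(s_{\mathcal{X}}(u,\alpha))}$, and $\mathrm{Med}(\mathcal{X};D_{FP})$ is the set of maximizers of $D_{FP}(\cdot;\mathcal{X})$ over $\mathcal{F}_c(\mathbb{R})$. *)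

From HB Require Import structures.
From mathcomp Require Import all_boot all_order all_algebra.
From mathcomp Require Import all_classical all_reals all_analysis.
Set Implicit Arguments. Unset Strict Implicit. Unset Printing Implicit Defensive.
Import Order.TTheory GRing.Theory Num.Theory numFieldNormedType.Exports.
Local Open Scope classical_set_scope.
Local Open Scope ring_scope.

Section FuzzyDefs.
Context {R : realType}.

Definition level (A : R -> R) (a : R) : set R :=
  if a == 0 then closure [set x | 0 < A x] else [set x | a <= A x].

Definition isFc (A : R -> R) : Prop :=
  (forall x, 0 <= A x <= 1) /\
  (forall a, 0 <= a <= 1 -> exists l r : R, l <= r /\ level A a = [set x | l <= x <= r]).

Definition supf (A : R -> R) (u a : R) : R := sup [set u * v | v in level A a].

Definition dir_set : set R := [set -1; 1].
Definition unit_int : set R := [set a | 0 <= a <= 1].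

Context {d : measure_display} {T : measurableType d} (P : probability T R).

Definition Med (X : T -> R) : set R :=
  [set m | ((2^-1)%:E <= P [set w | (X w <= m)%R])%E /\ ((2^-1)%:E <= P [set w | (m <= X w)%R])%E].
Definition lmed (X : T -> R) : R := inf (Med X).
Definition umed (X : T -> R) : R := sup (Med X).
Definition med (X : T -> R) : R := (lmed X + umed X) / 2.
Definition MAD (X : T -> R) : R := med (fun w => `|X w - med X|).

Definition fuzzy_rv (X : T -> R -> R) : Prop :=
  (forall w, isFc (X w)) /\
  (forall a, 0 <= a <= 1 -> forall K : set R, compact K ->
     measurable [set w | level (X w) a `&` K !=set0]).

Definition nondegenerate_frv (X : T -> R -> R) : Prop :=
  ~ exists A, isFc A /\ {ae P, forall w, X w = A}.

Definition sX (X : T -> R -> R) (u a : R) : T -> R := fun w => supf (X w) u a.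

Definition Med_s (X : T -> R -> R) : set (R -> R) :=
  [set A | isFc A /\ forall u a, dir_set u -> unit_int a -> Med (sX X u a) (supf A u a)].

(* fratio |s_A - med| / MAD in extended reals: c/0 = +oo for c > 0, 0/0 = 0 *)
Definition fratio (c m : R) : \bar R :=
  if m == 0 then (if c == 0 then 0%E else +oo%E) else (c / m)%:E.

Definition Oout (A : R -> R) (X : T -> R -> R) : \bar R :=
  ereal_sup [set r | exists u a, [/\ dir_set u, unit_int a &
      r = fratio `|supf A u a - med (sX X u a)| (MAD (sX X u a))]].

(* D_FP = (1 + O)^-1, with (1 + oo)^-1 = 0 *)
Definition D_FP (A : R -> R) (X : T -> R -> R) : R :=
  match Oout A X with
  | EFin o => (1 + o)^-1
  | _ => 0
  end.

Definition Med_DFP (X : T -> R -> R) : set (R -> R) :=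
  [set A | isFc A /\ forall B, isFc B -> D_FP B X <= D_FP A X].

Definition med_Gr (X : T -> R -> R) : R -> R := fun t =>
  sup [set inf (range (fun w => X w (Y w))) |
       Y in [set Y : T -> R | measurable_fun setT Y /\ Med Y t]].

End FuzzyDefs.

From HB Require Import structures.
From mathcomp Require Import all_boot all_order all_algebra.
From mathcomp Require Import all_classical all_reals all_analysis.
From mathcomp Require Import measurable_realfun lra.
Import Order.TTheory GRing.Theory Num.Theory numFieldNormedType.Exports.
Local Open Scope classical_set_scope.
Local Open Scope ring_scope.
Set Implicit Arguments. Unset Strict Implicit. Unset Printing Implicit Defensive.

(* The endpoints inf X_a and sup X_a of the levels of X are random variables,
   monotone in a, left-continuous on (0, 1] and right-continuous at 0, because
   each X w is a fuzzy number.  Their unique medians inherit these properties: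
   monotonicity because the median is monotone in the variable, continuity by
   continuity of the probability along monotone sequences of events.  By the
   representation theorem for fuzzy numbers, the segments
   [med (inf X_a), med (sup X_a)] are then the levels of exactly one element of
   F_c(R), which is med_Si.  Both Med_s and the maximizers of D_FP are the
   elements whose support function is the median of s_X, hence med_Si.  For
   med_Gr, a variable Y with median t has all X w (Y w) >= a only if t lies in
   the a-level of med_Si, and conversely clamping t into the a-levels of X
   yields such a Y. *)

Section FuzzyNumber.
Context {R : realType}.
Implicit Types (A B : R -> R) (a b c x : R).

Definition lend A a : R := - supf A (-1) a.
Definition rend A a : R := supf A 1 a.

Lemma lendE A a : lend A a = inf (level A a).
Proof. by rewrite /lend /supf /inf (eq_imagel (fun v _ => mulN1r v)). Qed.

Lemma rendE A a : rend A a = sup (level A a).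
Proof. by rewrite /rend /supf (eq_image_id (fun v _ => mul1r v)). Qed.

Lemma levelE A a : a != 0 -> level A a = [set x | a <= A x].
Proof. by rewrite /level => /negbTE ->. Qed.

Lemma level0E A : level A 0 = closure [set x | 0 < A x].
Proof. by rewrite /level eqxx. Qed.

Lemma Fc_ge0 A x : isFc A -> 0 <= A x.
Proof. by case=> /(_ x) /andP[]. Qed.

Lemma Fc_le1 A x : isFc A -> A x <= 1.
Proof. by case=> /(_ x) /andP[]. Qed.

Lemma Fc_segment A a : isFc A -> 0 <= a <= 1 ->
  lend A a <= rend A a /\ level A a = [set x | lend A a <= x <= rend A a].
Proof.
case=> _ hA /hA [l [r [lr E]]].
by rewrite lendE rendE E -set_itvcc inf_itvcc // sup_itvcc.
Qed.

Lemma Fc_ends_le A a : isFc A -> 0 <= a <= 1 -> lend A a <= rend A a.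
Proof. by move=> hA /(Fc_segment hA) []. Qed.

Lemma Fc_levelE A a : isFc A -> 0 <= a <= 1 ->
  level A a = [set x | lend A a <= x <= rend A a].
Proof. by move=> hA /(Fc_segment hA) []. Qed.

Lemma level_anti A a b : 0 <= a -> a <= b -> level A b `<=` level A a.
Proof.
move=> a0 ab x; have [b0|b0] := eqVneq b 0.
  by move: ab; rewrite b0 => ab; have -> : a = 0 by apply/le_anti; rewrite a0 ab.
rewrite levelE //= => bx; have [->|a0'] := eqVneq a 0.
  rewrite level0E; apply: subset_closure; rewrite /= (lt_le_trans _ bx) //.
  by rewrite lt_neqAle eq_sym b0 (le_trans a0 ab).
by rewrite levelE //=; apply: le_trans bx.
Qed.

Lemma Fc_ends_mono A a b : isFc A -> 0 <= a -> a <= b -> b <= 1 ->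
  lend A a <= lend A b /\ rend A b <= rend A a.
Proof.
move=> hA a0 ab b1.
have ha : 0 <= a <= 1 by rewrite a0 (le_trans ab b1).
have hb : 0 <= b <= 1 by rewrite (le_trans a0 ab) b1.
have sub := level_anti (A := A) a0 ab; rewrite !Fc_levelE // in sub.
have lrb := Fc_ends_le hA hb.
have /sub/andP[-> _] : lend A b <= lend A b <= rend A b by rewrite lexx lrb.
by have /sub/andP[_ ->] : lend A b <= rend A b <= rend A b by rewrite lexx lrb.
Qed.

Lemma Fc_level_leftc A b x : isFc A -> 0 < b ->
  (forall g, 0 < g < b -> level A g x) -> level A b x.
Proof.
move=> hA b0 H; rewrite levelE ?gt_eqF //= leNgt; apply/negP => /midf_lt[lo hi].
have mid0 : 0 < (A x + b) / 2 := le_lt_trans (Fc_ge0 x hA) lo.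
have /H : 0 < (A x + b) / 2 < b by rewrite mid0 hi.
by rewrite levelE ?gt_eqF //= leNgt lo.
Qed.

Lemma lend_leftc A b c : isFc A -> 0 < b <= 1 ->
  (forall g, 0 < g < b -> lend A g <= c) -> lend A b <= c.
Proof.
move=> hA /andP[b0 b1] H; rewrite leNgt; apply/negP => cb.
have hb : 0 <= b <= 1 by rewrite ltW.
suff : level A b c by rewrite Fc_levelE //= leNgt cb.
apply: Fc_level_leftc => // g /andP[g0 gb].
have hg : 0 <= g <= 1 by rewrite ltW //= (le_trans (ltW gb)).
rewrite Fc_levelE //= H ?g0 //= (le_trans (ltW cb)) // (le_trans (Fc_ends_le hA hb)) //.
by have [] := Fc_ends_mono hA (ltW g0) (ltW gb) b1.
Qed.

Lemma rend_leftc A b c : isFc A -> 0 < b <= 1 ->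
  (forall g, 0 < g < b -> c <= rend A g) -> c <= rend A b.
Proof.
move=> hA /andP[b0 b1] H; rewrite leNgt; apply/negP => bc.
have hb : 0 <= b <= 1 by rewrite ltW.
suff : level A b c by rewrite Fc_levelE //= => /andP[_]; rewrite leNgt bc.
apply: Fc_level_leftc => // g /andP[g0 gb].
have hg : 0 <= g <= 1 by rewrite ltW //= (le_trans (ltW gb)).
rewrite Fc_levelE //= H ?g0 // andbT (le_trans _ (ltW bc)) //.
rewrite (le_trans _ (Fc_ends_le hA hb)) //.
by have [] := Fc_ends_mono hA (ltW g0) (ltW gb) b1.
Qed.

Lemma Fc_level0_sub A (C : set R) : isFc A -> closed C ->
  (forall g, 0 < g <= 1 -> level A g `<=` C) -> level A 0 `<=` C.
Proof.
move=> hA cC H; rewrite level0E (closure_id C).1 //; apply: closureS => x /= Ax.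
have g0 : 0 < Num.min (A x) 1 by rewrite lt_min Ax ltr01.
apply: (H (Num.min (A x) 1)); first by rewrite g0 ge_min lexx orbT.
by rewrite levelE ?gt_eqF //= ge_min lexx.
Qed.

Lemma lend_right0 A c : isFc A ->
  (forall g, 0 < g <= 1 -> c <= lend A g) -> c <= lend A 0.
Proof.
move=> hA H; have h0 : 0 <= (0 : R) <= 1 by rewrite lexx ler01.
suff /(_ (lend A 0)) : level A 0 `<=` [set x | c <= x].
  by apply; rewrite Fc_levelE //= lexx Fc_ends_le.
apply: Fc_level0_sub => //.
move=> g /andP[g0 g1] x; rewrite Fc_levelE ?(ltW g0) //= => /andP[+ _].
by apply/le_trans/H; rewrite g0.
Qed.

Lemma rend_right0 A c : isFc A ->
  (forall g, 0 < g <= 1 -> rend A g <= c) -> rend A 0 <= c.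
Proof.
move=> hA H; have h0 : 0 <= (0 : R) <= 1 by rewrite lexx ler01.
suff /(_ (rend A 0)) : level A 0 `<=` [set x | x <= c].
  by apply; rewrite Fc_levelE //= lexx Fc_ends_le.
apply: Fc_level0_sub => //.
move=> g /andP[g0 g1] x; rewrite Fc_levelE ?(ltW g0) //= => /andP[_ /le_trans].
by apply; apply: H; rewrite g0.
Qed.

Lemma Fc_level_inj A B : isFc A -> isFc B ->
  (forall a, 0 <= a <= 1 -> level A a = level B a) -> A = B.
Proof.
suff le C D x : isFc C -> isFc D ->
    (forall a, 0 <= a <= 1 -> level C a = level D a) -> C x <= D x.
  by move=> hA hB E; apply/funext => x; apply/le_anti; rewrite !le // => a /E ->.
move=> hC hD E; have [->|Cx0] := eqVneq (C x) 0; first exact: Fc_ge0.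
have hx : 0 <= C x <= 1 by rewrite (Fc_ge0 _ hC) (Fc_le1 _ hC).
have : level C (C x) x by rewrite levelE //=.
by rewrite E // levelE //=; exact: id.
Qed.

Lemma Fc_ends_inj A B : isFc A -> isFc B ->
  (forall a, 0 <= a <= 1 -> lend A a = lend B a /\ rend A a = rend B a) -> A = B.
Proof.
move=> hA hB E; apply: Fc_level_inj => // a ha.
by rewrite !Fc_levelE //; have [-> ->] := E a ha.
Qed.

End FuzzyNumber.

Section Clamp.
Context {R : realType}.
Implicit Types l r x : R.

Definition clamp l r x : R := Num.max l (Num.min x r).

Lemma clamp_in l r x : l <= r -> l <= clamp l r x <= r.
Proof. by move=> lr; rewrite le_max lexx ge_max lr ge_min lexx orbT. Qed.

Lemma clamp_le l r x : l <= x -> clamp l r x <= x.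
Proof. by move=> lx; rewrite /clamp ge_max lx ge_min lexx. Qed.

Lemma clamp_ge l r x : x <= r -> x <= clamp l r x.
Proof. by move=> xr; rewrite /clamp le_max le_min lexx xr orbT. Qed.

Lemma clamp_near l r x e : 0 < e -> l <= r -> l - e < x < r + e -> `|x - clamp l r x| < e.
Proof.
move=> e0 lr /andP[lx xr]; rewrite /clamp ltr_norml.
have [xl|lx'] := ltP x l.
  by rewrite (min_l (ltW (lt_le_trans xl lr))) (max_l (ltW xl)); apply/andP; split; lra.
have [rx|xr'] := ltP r x.
  by rewrite (max_r lr); apply/andP; split; lra.
by rewrite (max_r lx'); apply/andP; split; lra.
Qed.

End Clamp.

Section FuzzyOfEnds.
Context {R : realType}.
Variables lo hi : R -> R.
Hypothesis lo_le_hi : forall a, 0 <= a <= 1 -> lo a <= hi a.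
Hypothesis ends_mono : forall a b, 0 <= a -> a <= b -> b <= 1 -> lo a <= lo b /\ hi b <= hi a.
Hypothesis lo_leftc : forall b c, 0 < b <= 1 ->
  (forall g, 0 < g < b -> lo g <= c) -> lo b <= c.
Hypothesis hi_leftc : forall b c, 0 < b <= 1 ->
  (forall g, 0 < g < b -> c <= hi g) -> c <= hi b.
Hypothesis lo_right0 : forall c, (forall g, 0 < g <= 1 -> c <= lo g) -> c <= lo 0.
Hypothesis hi_right0 : forall c, (forall g, 0 < g <= 1 -> hi g <= c) -> hi 0 <= c.

Definition ends_set t := [set a : R | (0 <= a <= 1) && (lo a <= t <= hi a)].
Definition fuzzy_of_ends t := sup (ends_set t).
Local Notation F := fuzzy_of_ends.

Lemma ends_set_ub t a : ends_set t a -> a <= F t.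
Proof.
move=> ta; apply: sup_upper_bound => //; split; first by exists a.
by exists 1 => b /andP[/andP[_ ?] _].
Qed.

Lemma ends_set_down t a b : ends_set t a -> 0 <= b -> b <= a -> ends_set t b.
Proof.
move=> /andP[/andP[a0 a1] /andP[loa hia]] b0 ba; have [lob hib] := ends_mono b0 ba a1.
by rewrite /ends_set /= b0 (le_trans ba a1) (le_trans lob loa) (le_trans hia hib).
Qed.

Lemma fuzzy_of_ends_gt0 t : 0 < F t -> ends_set t !=set0.
Proof. by move=> Ft0; apply/set0P/negP => /eqP E; move: Ft0; rewrite /F E sup0 ltxx. Qed.

Lemma fuzzy_of_ends_01 t : 0 <= F t <= 1.
Proof.
have [E|/set0P[a ta]] := eqVneq (ends_set t) set0; first by rewrite /F E sup0 lexx ler01.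
rewrite (le_trans _ (ends_set_ub ta)) ?(andP (andP ta).1).1 //=.
by apply: ge_sup; [exists a | move=> b /andP[/andP[_ ?] _]].
Qed.

Lemma fuzzy_of_ends_level a : 0 < a <= 1 -> [set t | a <= F t] = [set t | lo a <= t <= hi a].
Proof.
move=> /andP[a0 a1]; apply/seteqP; split => t /=; last first.
  by move=> h; apply: ends_set_ub; rewrite /ends_set /= h (ltW a0) a1.
move=> aF; have ne := fuzzy_of_ends_gt0 (lt_le_trans a0 aF).
have below g : 0 < g < a -> ends_set t g.
  move=> /andP[g0 ga]; have [e te ge] := sup_gt ne (lt_le_trans ga aF).
  exact: ends_set_down te (ltW g0) (ltW ge).
apply/andP; split.
  by apply: lo_leftc; rewrite ?a0 ?a1 // => g /below /andP[_ /andP[]].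
by apply: hi_leftc; rewrite ?a0 ?a1 // => g /below /andP[_ /andP[]].
Qed.

Lemma lo_right0_lt c : lo 0 < c -> exists2 g, 0 < g <= 1 & lo g < c.
Proof.
move=> lo0c; apply: contrapT => H; move: lo0c; apply/negP; rewrite -leNgt.
by apply: lo_right0 => g hg; rewrite leNgt; apply/negP => lgc; apply: H; exists g.
Qed.

Lemma hi_right0_gt c : c < hi 0 -> exists2 g, 0 < g <= 1 & c < hi g.
Proof.
move=> chi0; apply: contrapT => H; move: chi0; apply/negP; rewrite -leNgt.
by apply: hi_right0 => g hg; rewrite leNgt; apply/negP => cg; apply: H; exists g.
Qed.

Lemma fuzzy_of_ends_level0 : closure [set t | 0 < F t] = [set t | lo 0 <= t <= hi 0].
Proof.
apply/seteqP; split.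
  rewrite [X in _ `<=` X](closure_id _).1; last first.
    have -> : [set t | lo 0 <= t <= hi 0] = `[lo 0, hi 0]%classic by rewrite set_itvcc.
    exact: interval_closed.
  apply: closureS => t /fuzzy_of_ends_gt0 [a /andP[ha /andP[lot thi]]].
  have [l0 h0] := ends_mono (lexx 0) (andP ha).1 (andP ha).2.
  by rewrite /= (le_trans l0 lot) (le_trans thi h0).
move=> x /andP[lox xhi] B /nbhs_ballP [e /= e0 eB].
have [g1 /andP[g10 g11] lo_g1] : exists2 g, 0 < g <= 1 & lo g < lo 0 + e.
  by apply: lo_right0_lt; lra.
have [g2 /andP[g20 g21] hi_g2] : exists2 g, 0 < g <= 1 & hi 0 - e < hi g.
  by apply: hi_right0_gt; lra.
pose g := Num.min g1 g2.
have g0 : 0 < g by rewrite lt_min g10 g20.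
have g1' : g <= 1 by rewrite ge_min g11.
have gg1 : g <= g1 by rewrite ge_min lexx.
have gg2 : g <= g2 by rewrite ge_min lexx orbT.
have [lo_g _] := ends_mono (ltW g0) gg1 g11.
have [_ hi_g] := ends_mono (ltW g0) gg2 g21.
have lohi : lo g <= hi g by apply: lo_le_hi; rewrite ltW.
exists (clamp (lo g) (hi g) x); split.
  by rewrite /= (lt_le_trans g0) // ends_set_ub // /ends_set /= (ltW g0) g1' clamp_in.
by apply: eB; rewrite -ball_normE /= clamp_near //; apply/andP; split; lra.
Qed.

Lemma fuzzy_of_ends_levelE a : 0 <= a <= 1 -> level F a = [set t | lo a <= t <= hi a].
Proof.
move=> /andP[a0 a1]; have [->|an0] := eqVneq a 0.
  by rewrite level0E fuzzy_of_ends_level0.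
by rewrite levelE // fuzzy_of_ends_level // lt_neqAle eq_sym an0 a0.
Qed.

Lemma fuzzy_of_ends_Fc : isFc F.
Proof.
split=> [t|a ha]; first exact: fuzzy_of_ends_01.
by exists (lo a), (hi a); rewrite lo_le_hi // fuzzy_of_ends_levelE.
Qed.

Lemma fuzzy_of_ends_ends a : 0 <= a <= 1 -> lend F a = lo a /\ rend F a = hi a.
Proof.
move=> ha; rewrite lendE rendE fuzzy_of_ends_levelE // -set_itvcc.
by rewrite inf_itvcc ?sup_itvcc ?lo_le_hi.
Qed.

End FuzzyOfEnds.

Section Median.
Context {R : realType} {d : measure_display} {T : measurableType d} (P : probability T R).
Implicit Types (Y L U : T -> R).

Lemma measurable_fun_infty_c Y c : measurable_fun setT Y -> measurable [set w | Y w <= c].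
Proof.
move=> mY; rewrite -[X in measurable X]setTI -preimage_itvNyc.
exact: mY measurableT _ (measurable_itv _).
Qed.

Lemma measurable_fun_c_infty Y c : measurable_fun setT Y -> measurable [set w | c <= Y w].
Proof.
move=> mY; rewrite -[X in measurable X]setTI -preimage_itvcy.
exact: mY measurableT _ (measurable_itv _).
Qed.

Lemma c_infty_measurable_fun Y :
  (forall c, measurable [set w | c <= Y w]) -> measurable_fun setT Y.
Proof.
move=> mY; apply: (measurability (@RGenCInfty.G R)).
  exact: RGenCInfty.measurableE.
by move=> /= _ [_ [c ->] <-]; rewrite setTI preimage_itvcy.
Qed.

Lemma prob_setT_nonempty : [set: T] !=set0.
Proof.
apply/set0P/negP => /eqP T0; have := probability_setT P.
by rewrite T0 measure0 => /eqP; rewrite eq_sym onee_eq0.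
Qed.

Lemma Med1_med Y m : Med P Y = [set m] -> med P Y = m.
Proof. by move=> E; rewrite /med /lmed /umed E inf1 sup1; lra. Qed.

Lemma MedN Y x : Med P (fun w => - Y w) x <-> Med P Y (- x).
Proof.
rewrite /Med /=.
have -> : [set w | - Y w <= x] = [set w | - x <= Y w].
  by apply/seteqP; split => w /=; rewrite lerNl.
have -> : [set w | x <= - Y w] = [set w | Y w <= - x].
  by apply/seteqP; split => w /=; rewrite lerNr.
by split=> -[].
Qed.

Lemma Med1N Y m : Med P Y = [set m] -> Med P (fun w => - Y w) = [set - m].
Proof.
move=> E; apply/seteqP; split => x /=.
  by move/MedN; rewrite E /= => <-; rewrite opprK.
by move=> ->; apply/MedN; rewrite opprK E.
Qed.

Lemma Med1_prob_le_lt Y m c : measurable_fun setT Y -> Med P Y = [set m] -> c < m ->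
  (P [set w | (Y w <= c)%R] < (2^-1)%:E)%E.
Proof.
move=> mY E cm; rewrite ltNge; apply/negP => Pc.
have [_ Pm] : Med P Y m by rewrite E.
suff : Med P Y c by rewrite E => /= cE; move: cm; rewrite cE ltxx.
split => //; apply: le_trans Pm _; apply: le_measure; rewrite ?inE.
- exact: measurable_fun_c_infty.
- exact: measurable_fun_c_infty.
- by move=> w /=; apply: le_trans (ltW cm).
Qed.

Lemma Med1_prob_ge_lt Y m c : measurable_fun setT Y -> Med P Y = [set m] -> m < c ->
  (P [set w | (c <= Y w)%R] < (2^-1)%:E)%E.
Proof.
move=> mY E mc; rewrite ltNge; apply/negP => Pc.
have [Pm _] : Med P Y m by rewrite E.
suff : Med P Y c by rewrite E => /= cE; move: mc; rewrite cE ltxx.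
split => //; apply: le_trans Pm _; apply: le_measure; rewrite ?inE.
- exact: measurable_fun_infty_c.
- exact: measurable_fun_infty_c.
- by move=> w /= /le_trans; apply; apply: ltW.
Qed.

Lemma Med_le_Med1 Y1 Y2 m1 m2 : measurable_fun setT Y1 -> measurable_fun setT Y2 ->
  (forall w, Y1 w <= Y2 w) -> Med P Y1 m1 -> Med P Y2 = [set m2] -> m1 <= m2.
Proof.
move=> mY1 mY2 Y12 [_ P1] E2; rewrite leNgt; apply/negP => m21.
have := Med1_prob_ge_lt mY2 E2 m21; rewrite ltNge => /negP; apply.
apply: le_trans P1 _; apply: le_measure; rewrite ?inE; try exact: measurable_fun_c_infty.
by move=> w /= /le_trans; apply.
Qed.

Lemma Med1_le_Med Y1 Y2 m1 m2 : measurable_fun setT Y1 -> measurable_fun setT Y2 ->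
  (forall w, Y1 w <= Y2 w) -> Med P Y1 = [set m1] -> Med P Y2 m2 -> m1 <= m2.
Proof.
move=> mY1 mY2 Y12 E1 [P2 _]; rewrite leNgt; apply/negP => m21.
have := Med1_prob_le_lt mY1 E1 m21; rewrite ltNge => /negP; apply.
apply: le_trans P2 _; apply: le_measure; rewrite ?inE; try exact: measurable_fun_infty_c.
by move=> w /=; apply: le_trans.
Qed.

Lemma prob_bigcap_ge (F : (set T)^nat) (c : \bar R) : (forall n, measurable (F n)) ->
  nonincreasing_seq F -> (forall n, c <= P (F n))%E -> (c <= P (\bigcap_n F n))%E.
Proof.
move=> mF nF cF.
have PF : (P \o F) @ \oo --> P (\bigcap_n F n).
  apply: nonincreasing_cvg_mu => //; last exact: bigcapT_measurable.
  by rewrite (le_lt_trans (probability_le1 _ _)) ?ltry.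
rewrite -(cvg_lim _ PF) //; apply: lime_ge; first by apply/cvg_ex; exists (P (\bigcap_n F n)).
exact: nearW.
Qed.

(* If m > t, uniqueness of the median gives P(Y <= t) < 1/2, whereas continuity
   from above of P gives P(Y <= t) >= lim P(Ys n <= t) >= 1/2. *)
Lemma Med1_le_of_seq Y (Ys : nat -> T -> R) m (ms : nat -> R) t :
  measurable_fun setT Y -> (forall n, measurable_fun setT (Ys n)) ->
  Med P Y = [set m] -> (forall n, Med P (Ys n) (ms n)) -> (forall n, ms n <= t) ->
  (forall n k w, (n <= k)%N -> Ys n w <= Ys k w) ->
  (forall w, (forall n, Ys n w <= t) -> Y w <= t) -> m <= t.
Proof.
move=> mY mYs MY MYs mst Ys_incr Ys_lim; rewrite leNgt; apply/negP => tm.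
have := Med1_prob_le_lt mY MY tm; rewrite ltNge => /negP; apply.
pose F n := [set w | Ys n w <= t].
have mF n : measurable (F n) by exact: measurable_fun_infty_c.
have half_F n : ((2^-1)%:E <= P (F n))%E.
  have [Pn _] := MYs n; apply: le_trans Pn _; apply: le_measure; rewrite ?inE //.
    exact: measurable_fun_infty_c.
  by move=> w /= h; apply: le_trans h (mst n).
apply: le_trans (prob_bigcap_ge mF _ half_F) _.
  by move=> n k nk; apply/subsetPset => w /= Ykt; exact: le_trans (Ys_incr n k w nk) Ykt.
apply: le_measure; rewrite ?inE; [exact: bigcapT_measurable | exact: measurable_fun_infty_c |].
by move=> w Fw; apply: Ys_lim => n; exact: Fw.
Qed.

Section MonotoneFamily.
Variables (Z : R -> T -> R) (m : R -> R).
Hypothesis mZ : forall g, 0 <= g <= 1 -> measurable_fun setT (Z g).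
Hypothesis MZ : forall g, 0 <= g <= 1 -> Med P (Z g) = [set m g].
Hypothesis Z_mono : forall g h w, 0 <= g -> g <= h -> h <= 1 -> Z g w <= Z h w.

Lemma Med1_leftc b c : 0 < b <= 1 ->
  (forall w s, (forall g, 0 < g < b -> Z g w <= s) -> Z b w <= s) ->
  (forall g, 0 < g < b -> m g <= c) -> m b <= c.
Proof.
move=> /andP[b0 b1] Z_leftc mc.
pose al n : R := b - b / n.+2%:R.
have al_in n : 0 < al n < b.
  rewrite /al ltrBlDr ltrDl divr_gt0 ?ltr0n // andbT subr_gt0.
  by rewrite ltr_pdivrMr ?ltr0n // ltr_pMr // ltr1n.
have al0 n : 0 <= al n by have /andP[/ltW] := al_in n.
have al1 n : al n <= 1 by have /andP[_ /ltW/le_trans] := al_in n; apply.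
have al_incr n k : (n <= k)%N -> al n <= al k.
  move=> nk; rewrite lerD2l lerN2 ler_wpM2l ?(ltW b0) // lef_pV2 ?posrE ?ltr0n //.
  by rewrite ler_nat !ltnS.
have al_cofinal g : g < b -> exists n, g <= al n.
  move=> gb; have bg : 0 < b - g by rewrite subr_gt0.
  exists (Num.bound (b / (b - g))).
  have := archi_boundP (divr_ge0 (ltW b0) (ltW bg)).
  rewrite ltr_pdivrMr // /al lerBrDr -lerBrDl => bnd.
  rewrite ler_pdivrMr ?ltr0n //; apply/ltW/(lt_le_trans bnd).
  by rewrite mulrC ler_wpM2l ?(ltW bg) // ler_nat -addn2 leq_addr.
apply: (Med1_le_of_seq (Y := Z b) (Ys := fun n => Z (al n)) (ms := fun n => m (al n))).
- by apply: mZ; rewrite (ltW b0).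
- by move=> n; apply: mZ; rewrite al0 al1.
- by apply: MZ; rewrite (ltW b0).
- by move=> n; rewrite MZ ?al0 ?al1.
- by move=> n; apply: mc.
- by move=> n k w nk; apply: Z_mono; rewrite ?al0 ?al1 ?al_incr.
move=> w Zt; apply: Z_leftc => g /andP[g0 gb]; have [n gn] := al_cofinal g gb.
by apply: le_trans (Zt n); apply: Z_mono; rewrite ?(ltW g0) ?al1.
Qed.

Lemma Med1_right0 c :
  (forall w s, (forall g, 0 < g <= 1 -> s <= Z g w) -> s <= Z 0 w) ->
  (forall g, 0 < g <= 1 -> c <= m g) -> c <= m 0.
Proof.
move=> Z_right0 cm.
pose al n : R := n.+1%:R^-1.
have al_in n : 0 < al n <= 1 by rewrite invr_gt0 ltr0n invf_le1 ?ltr0n // ler1n.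
have al0 n : 0 <= al n by have /andP[/ltW] := al_in n.
have al1 n : al n <= 1 by have /andP[] := al_in n.
have al_decr n k : (n <= k)%N -> al k <= al n.
  by move=> nk; rewrite lef_pV2 ?posrE ?ltr0n // ler_nat ltnS.
have al_cofinal g : 0 < g -> exists n, al n <= g.
  move=> g0; have gV : 0 <= g^-1 by rewrite invr_ge0 ltW.
  exists (Num.bound g^-1); rewrite -[leRHS]invrK lef_pV2 ?posrE ?invr_gt0 ?ltr0n //.
  by apply/ltW/(lt_le_trans (archi_boundP gV)); rewrite ler_nat.
rewrite -lerN2.
apply: (Med1_le_of_seq (Y := fun w => - Z 0 w) (Ys := fun n w => - Z (al n) w)
  (ms := fun n => - m (al n))).
- by apply: measurable_funN; apply: mZ; rewrite lexx ler01.
- by move=> n; apply: measurable_funN; apply: mZ; rewrite al0 al1.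
- by apply: Med1N; apply: MZ; rewrite lexx ler01.
- by move=> n; apply/MedN; rewrite opprK MZ ?al0 ?al1.
- by move=> n; rewrite lerN2; apply: cm.
- by move=> n k w nk; rewrite lerN2; apply: Z_mono; rewrite ?al0 ?al1 ?al_decr.
move=> w Zc; rewrite lerN2; apply: Z_right0 => g /andP[g0 g1].
have [n ng] := al_cofinal g g0; apply: le_trans (_ : Z (al n) w <= _).
  by rewrite -lerN2.
by apply: Z_mono; rewrite ?al0.
Qed.

End MonotoneFamily.

Lemma measurable_fun_clamp L U t : measurable_fun setT L -> measurable_fun setT U ->
  measurable_fun setT (fun w => clamp (L w) (U w) t).
Proof. by move=> mL mU; apply: measurable_maxr => //; exact: measurable_minr. Qed.

Lemma Med_clamp L U l u t : measurable_fun setT L -> measurable_fun setT U ->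
  Med P L l -> Med P U u -> l <= t <= u ->
  Med P (fun w => clamp (L w) (U w) t) t.
Proof.
move=> mL mU [PL _] [_ PU] /andP[lt tu]; have mC := measurable_fun_clamp t mL mU.
split.
  apply: le_trans PL _; apply: le_measure; rewrite ?inE.
  - exact: measurable_fun_infty_c.
  - exact: measurable_fun_infty_c.
  - by move=> w /= Ll; apply: clamp_le; apply: le_trans Ll lt.
apply: le_trans PU _; apply: le_measure; rewrite ?inE.
- exact: measurable_fun_c_infty.
- exact: measurable_fun_c_infty.
- by move=> w /= uU; apply: clamp_ge; apply: le_trans tu uU.
Qed.

Lemma Med_cst t : Med P (fun=> t) t.
Proof.
rewrite /Med /= (_ : [set w : T | t <= t] = setT); last by apply/seteqP; split => // w _ /=.
by split; rewrite probability_setT lee_fin invf_le1 // ler1n.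
Qed.

Lemma Med_ge0 Y x : (forall w, 0 <= Y w) -> Med P Y x -> 0 <= x.
Proof.
move=> Y0 [Px _]; rewrite leNgt; apply/negP => x0; move: Px.
suff -> : [set w | Y w <= x] = set0 by rewrite measure0 lee_fin leNgt invr_gt0 ltr0n.
by apply/seteqP; split => // w /=; rewrite leNgt (lt_le_trans x0 (Y0 w)).
Qed.

Lemma med_ge0 Y : (forall w, 0 <= Y w) -> 0 <= med P Y.
Proof.
move=> Y0; rewrite /med /lmed /umed divr_ge0 // addr_ge0 //.
  have [->|/set0P ne] := eqVneq (Med P Y) set0; first by rewrite inf0.
  by apply: lb_le_inf => // x /(Med_ge0 Y0).
have [->|/set0P[x Mx]] := eqVneq (Med P Y) set0; first by rewrite sup0.
have [hs|hs] := pselect (has_sup (Med P Y)); last by rewrite sup_out.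
exact: le_trans (Med_ge0 Y0 Mx) (sup_upper_bound hs Mx).
Qed.

Lemma MAD_ge0 Y : 0 <= MAD P Y.
Proof. by apply: med_ge0 => w; exact: normr_ge0. Qed.

End Median.

Section MedianFuzzyNumber.
Context {R : realType} {d : measure_display} {T : measurableType d} (P : probability T R).
Variable X : T -> R -> R.
Hypothesis hX : fuzzy_rv X.

Let XFc w : isFc (X w) := hX.1 w.

Definition Xlend a w := lend (X w) a.
Definition Xrend a w := rend (X w) a.

Lemma Xlend_mono g h w : 0 <= g -> g <= h -> h <= 1 -> Xlend g w <= Xlend h w.
Proof. by move=> g0 gh h1; have [] := Fc_ends_mono (XFc w) g0 gh h1. Qed.

Lemma Xrend_anti g h w : 0 <= g -> g <= h -> h <= 1 -> Xrend h w <= Xrend g w.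
Proof. by move=> g0 gh h1; have [] := Fc_ends_mono (XFc w) g0 gh h1. Qed.

Lemma Xrend_ge_measurable a c : 0 <= a <= 1 -> measurable [set w | c <= Xrend a w].
Proof.
move=> ha; rewrite /Xrend.
have -> : [set w | c <= rend (X w) a] =
    \bigcup_n [set w | level (X w) a `&` `[c, c + n%:R]%classic !=set0].
  apply/seteqP; split => w /=.
    move=> cr; exists (Num.bound (rend (X w) a - c)) => //; exists (rend (X w) a).
    rewrite Fc_levelE //= in_itv /= lexx Fc_ends_le // cr; split=> //.
    by rewrite -lerBlDl ltW // archi_boundP // subr_ge0.
  move=> [n _ [y []]]; rewrite Fc_levelE //= in_itv /= => /andP[_ yr] /andP[cy _].
  exact: le_trans yr.
by apply: bigcupT_measurable => n; apply: hX.2 => //; exact: segment_compact.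
Qed.

Lemma Xlend_le_measurable a c : 0 <= a <= 1 -> measurable [set w | Xlend a w <= c].
Proof.
move=> ha; rewrite /Xlend.
have -> : [set w | lend (X w) a <= c] =
    \bigcup_n [set w | level (X w) a `&` `[c - n%:R, c]%classic !=set0].
  apply/seteqP; split => w /=.
    move=> lc; exists (Num.bound (c - lend (X w) a)) => //; exists (lend (X w) a).
    rewrite Fc_levelE //= in_itv /= lexx Fc_ends_le // lc andbT; split=> //.
    by rewrite lerBlDr -lerBlDl ltW // archi_boundP // subr_ge0.
  move=> [n _ [y []]]; rewrite Fc_levelE //= in_itv /= => /andP[ly _] /andP[_ yc].
  exact: le_trans ly yc.
by apply: bigcupT_measurable => n; apply: hX.2 => //; exact: segment_compact.
Qed.

Lemma measurable_Xrend a : 0 <= a <= 1 -> measurable_fun setT (Xrend a).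
Proof. by move=> ha; apply: c_infty_measurable_fun => c; exact: Xrend_ge_measurable. Qed.

Lemma measurable_Xlend a : 0 <= a <= 1 -> measurable_fun setT (Xlend a).
Proof.
move=> ha; rewrite (_ : Xlend a = \- (fun w => - Xlend a w)); last first.
  by apply/funext => w /=; rewrite opprK.
apply: measurable_funN; apply: c_infty_measurable_fun => c.
rewrite (_ : [set w | c <= - Xlend a w] = [set w | Xlend a w <= - c]).
  exact: Xlend_le_measurable.
by apply/seteqP; split => w /=; rewrite lerNr.
Qed.

Hypothesis hU : forall u a, dir_set u -> unit_int a -> exists m, Med P (sX X u a) = [set m].

Definition mlend a := - med P (sX X (-1) a).
Definition mrend a := med P (sX X 1 a).

Lemma Med_Xrend a : 0 <= a <= 1 -> Med P (Xrend a) = [set mrend a].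
Proof.
by move=> ha; have [m E] := hU (u := 1) (or_intror erefl) ha; rewrite /mrend (Med1_med E).
Qed.

Lemma Med_Xlend a : 0 <= a <= 1 -> Med P (Xlend a) = [set mlend a].
Proof.
move=> ha; have [m E] := hU (u := -1) (or_introl erefl) ha.
by rewrite /mlend (Med1_med E); exact: (Med1N E).
Qed.

Lemma mlend_le_mrend a : 0 <= a <= 1 -> mlend a <= mrend a.
Proof.
move=> ha; apply: (Med1_le_Med (measurable_Xlend ha) (measurable_Xrend ha) _ (Med_Xlend ha)).
  by move=> w; exact: Fc_ends_le.
by rewrite Med_Xrend.
Qed.

Lemma mends_mono a b : 0 <= a -> a <= b -> b <= 1 -> mlend a <= mlend b /\ mrend b <= mrend a.
Proof.
move=> a0 ab b1.
have ha : 0 <= a <= 1 by rewrite a0 (le_trans ab b1).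
have hb : 0 <= b <= 1 by rewrite (le_trans a0 ab) b1.
split.
  apply: (Med1_le_Med (measurable_Xlend ha) (measurable_Xlend hb) _ (Med_Xlend ha)).
    by move=> w; exact: Xlend_mono.
  by rewrite Med_Xlend.
apply: (Med1_le_Med (measurable_Xrend hb) (measurable_Xrend ha) _ (Med_Xrend hb)).
  by move=> w; exact: Xrend_anti.
by rewrite Med_Xrend.
Qed.

Lemma mlend_leftc b c : 0 < b <= 1 ->
  (forall g, 0 < g < b -> mlend g <= c) -> mlend b <= c.
Proof.
move=> hb; apply: (Med1_leftc measurable_Xlend Med_Xlend Xlend_mono hb) => w s.
exact: lend_leftc (XFc w) hb.
Qed.

Lemma mrend_leftc b c : 0 < b <= 1 ->
  (forall g, 0 < g < b -> c <= mrend g) -> c <= mrend b.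
Proof.
move=> hb cm; rewrite -lerN2.
apply: (Med1_leftc (Z := fun g w => - Xrend g w) (m := fun g => - mrend g)).
- by move=> g hg; apply: measurable_funN; exact: measurable_Xrend.
- by move=> g hg; apply: Med1N; exact: Med_Xrend.
- by move=> g h w g0 gh h1; rewrite lerN2; exact: Xrend_anti.
- exact: hb.
- by move=> w s H; rewrite lerNl; apply: rend_leftc (XFc w) hb _ => g /H; rewrite lerNl.
- by move=> g /cm; rewrite lerN2.
Qed.

Lemma mlend_right0 c : (forall g, 0 < g <= 1 -> c <= mlend g) -> c <= mlend 0.
Proof.
apply: (Med1_right0 measurable_Xlend Med_Xlend Xlend_mono) => w s.
exact: lend_right0 (XFc w).
Qed.

Lemma mrend_right0 c : (forall g, 0 < g <= 1 -> mrend g <= c) -> mrend 0 <= c.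
Proof.
move=> mc; rewrite -lerN2.
apply: (Med1_right0 (Z := fun g w => - Xrend g w) (m := fun g => - mrend g)).
- by move=> g hg; apply: measurable_funN; exact: measurable_Xrend.
- by move=> g hg; apply: Med1N; exact: Med_Xrend.
- by move=> g h w g0 gh h1; rewrite lerN2; exact: Xrend_anti.
- by move=> w s H; rewrite lerNr; apply: rend_right0 (XFc w) _ => g /H; rewrite lerNr.
- by move=> g /mc; rewrite lerN2.
Qed.

Definition medSi := fuzzy_of_ends mlend mrend.

Lemma medSi_Fc : isFc medSi.
Proof.
exact: fuzzy_of_ends_Fc mlend_le_mrend mends_mono mlend_leftc mrend_leftc
  mlend_right0 mrend_right0.
Qed.

Lemma medSi_ends a : 0 <= a <= 1 -> lend medSi a = mlend a /\ rend medSi a = mrend a.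
Proof.
exact: (fuzzy_of_ends_ends mlend_le_mrend mends_mono mlend_leftc mrend_leftc
  mlend_right0 mrend_right0).
Qed.

Lemma medSi_supf u a : dir_set u -> unit_int a -> supf medSi u a = med P (sX X u a).
Proof.
move=> [->|->] ha; have [lE rE] := medSi_ends ha; last exact: rE.
by apply: oppr_inj; rewrite -[LHS]/(lend medSi a) lE.
Qed.

Lemma supf_med_uniq A : isFc A ->
  (forall u a, dir_set u -> unit_int a -> supf A u a = med P (sX X u a)) -> A = medSi.
Proof.
move=> hA AE; apply: Fc_ends_inj hA medSi_Fc _ => a ha.
have [d1 dN1] : dir_set (1 : R) /\ dir_set (-1 : R) by split; [right | left].
by rewrite /lend /rend !AE // !medSi_supf.
Qed.

Lemma Med_s_medSi : Med_s P X = [set medSi].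
Proof.
apply/seteqP; split => [A [hA AM]|A ->] /=.
  apply: supf_med_uniq => // u a hu ha; have [m E] := hU hu ha.
  by move: (AM u a hu ha); rewrite E (Med1_med E).
split=> [|u a hu ha]; first exact: medSi_Fc.
by have [m E] := hU hu ha; rewrite medSi_supf // (Med1_med E) E.
Qed.


Lemma fratio_ge0 (c m : R) : 0 <= c -> 0 <= m -> (0 <= fratio c m)%E.
Proof.
move=> c0 m0; rewrite /fratio; case: ifP => _; first by case: ifP.
by rewrite lee_fin divr_ge0.
Qed.

Lemma fratio_le0 (c m : R) : 0 <= m -> (fratio c m <= 0)%E -> c <= 0.
Proof.
rewrite /fratio => m0; case: ifP => [_|/negbT mn0].
  by case: ifP => [/eqP -> //|_]; rewrite leye_eq.
by rewrite lee_fin ler_pdivrMr ?mul0r // lt_neqAle eq_sym mn0 m0.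
Qed.

Lemma Oout_ge0 A : (0 <= Oout P A X)%E.
Proof.
pose r := fratio `|supf A 1 0 - med P (sX X 1 0)| (MAD P (sX X 1 0)).
apply: (@le_trans _ _ r); first exact: fratio_ge0 (normr_ge0 _) (MAD_ge0 _ _).
by apply: ereal_sup_ubound; exists 1, 0; split; [right | rewrite /unit_int /= lexx ler01 |].
Qed.

Lemma Oout_medSi : Oout P medSi X = 0%E.
Proof.
apply/le_anti; rewrite Oout_ge0 andbT; apply: ge_ereal_sup => _ [u [a [hu ha ->]]].
by rewrite medSi_supf // subrr normr0 /fratio; case: ifP; rewrite ?eqxx ?mul0r.
Qed.

Lemma D_FP_le1 A : D_FP P A X <= 1.
Proof.
rewrite /D_FP; have := Oout_ge0 A; case: (Oout P A X) => // o; rewrite lee_fin => o0.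
by rewrite invf_le1 ?lerDl // ltr_wpDr.
Qed.

Lemma D_FP_medSi : D_FP P medSi X = 1.
Proof. by rewrite /D_FP Oout_medSi /= addr0 invr1. Qed.

Lemma D_FP_ge1 A : 1 <= D_FP P A X -> (Oout P A X <= 0)%E.
Proof.
rewrite /D_FP; have := Oout_ge0 A; case: (Oout P A X); rewrite ?ler10 // => o.
by rewrite !lee_fin => o0; rewrite invf_ge1 ?ltr_wpDr // gerDl.
Qed.

Lemma Med_DFP_medSi : Med_DFP P X = [set medSi].
Proof.
apply/seteqP; split => [A [hA Amax]|A ->] /=; last first.
  by split=> [|B _]; [exact: medSi_Fc | rewrite D_FP_medSi D_FP_le1].
have O0 : (Oout P A X <= 0)%E by apply: D_FP_ge1; rewrite -D_FP_medSi Amax //; exact: medSi_Fc.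
apply: supf_med_uniq => // u a hu ha; apply/eqP; rewrite -subr_eq0 -normr_le0.
apply: (fratio_le0 (MAD_ge0 P (sX X u a))); apply: le_trans O0.
by apply: ereal_sup_ubound; exists u, a.
Qed.

Definition grz_inf (Y : T -> R) := inf (range (fun w => X w (Y w))).

Let Gr_set t := [set grz_inf Y | Y in [set Y | measurable_fun setT Y /\ Med P Y t]].

Lemma grz_inf_le Y w : grz_inf Y <= X w (Y w).
Proof. by apply: ge_inf; [exists 0 => _ [v _ <-]; exact: Fc_ge0 | exists w]. Qed.

Lemma grz_inf_ge Y a : (forall w, a <= X w (Y w)) -> a <= grz_inf Y.
Proof.
move=> aY; have [w0 _] := prob_setT_nonempty P.
by apply: lb_le_inf => [|_ [w _ <-]]; [exists (X w0 (Y w0)), w0 | exact: aY].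
Qed.

Lemma Gr_set_has_sup t : has_sup (Gr_set t).
Proof.
split.
  by exists (grz_inf (fun=> t)), (fun=> t); split; [exact: measurable_cst | exact: Med_cst].
have [w0 _] := prob_setT_nonempty P.
by exists 1 => _ [Y _ <-]; apply: le_trans (grz_inf_le Y w0) (Fc_le1 _ (XFc w0)).
Qed.

Lemma med_Gr_le_medSi t : med_Gr P X t <= medSi t.
Proof.
apply: ge_sup; first exact: (Gr_set_has_sup t).1.
move=> _ [Y [mY MY] <-].
have [b0|b0] := leP (grz_inf Y) 0; first exact: le_trans b0 (Fc_ge0 _ medSi_Fc).
have [w0 _] := prob_setT_nonempty P.
have hb : 0 <= grz_inf Y <= 1 by rewrite ltW //= (le_trans (grz_inf_le Y w0)) ?Fc_le1.
have Ylev w : Xlend (grz_inf Y) w <= Y w <= Xrend (grz_inf Y) w.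
  have : level (X w) (grz_inf Y) (Y w) by rewrite levelE ?gt_eqF //=; exact: grz_inf_le.
  by rewrite Fc_levelE.
apply: ends_set_ub; rewrite /ends_set /= hb /=; apply/andP; split.
  apply: (Med1_le_Med (measurable_Xlend hb) mY _ (Med_Xlend hb) MY).
  by move=> w; case/andP: (Ylev w).
apply: (Med_le_Med1 mY (measurable_Xrend hb) _ MY (Med_Xrend hb)).
by move=> w; case/andP: (Ylev w).
Qed.

Lemma medSi_le_med_Gr t : medSi t <= med_Gr P X t.
Proof.
have Gr_ub Y : measurable_fun setT Y -> Med P Y t -> grz_inf Y <= med_Gr P X t.
  by move=> mY MY; apply: sup_upper_bound; [exact: Gr_set_has_sup | exists Y].
have [E|/set0P ne] := eqVneq (ends_set mlend mrend t) set0.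
  rewrite /medSi /fuzzy_of_ends E sup0.
  apply: le_trans (Gr_ub _ (measurable_cst t) (Med_cst P t)).
  by apply: grz_inf_ge => w; exact: Fc_ge0.
apply: ge_sup => // a /andP[ha lat].
have ML : Med P (Xlend a) (mlend a) by rewrite Med_Xlend.
have MU : Med P (Xrend a) (mrend a) by rewrite Med_Xrend.
have mL := measurable_Xlend ha; have mU := measurable_Xrend ha.
apply: le_trans (Gr_ub _ (measurable_fun_clamp t mL mU) (Med_clamp mL mU ML MU lat)).
apply: grz_inf_ge => w; have [->|a0] := eqVneq a 0; first exact: Fc_ge0.
have : level (X w) a (clamp (Xlend a w) (Xrend a w) t).
  by rewrite Fc_levelE //=; apply: clamp_in; exact: Fc_ends_le.
by rewrite levelE.
Qed.

Lemma med_Gr_medSi : med_Gr P X = medSi.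
Proof. by apply/funext => t; apply/le_anti; rewrite med_Gr_le_medSi medSi_le_med_Gr. Qed.

End MedianFuzzyNumber.

Unset Implicit Arguments. Set Strict Implicit.

Theorem theorem4p7 (R : realType) (d : measure_display) (T : measurableType d)
  (P : probability T R) (X : T -> R -> R) :
  fuzzy_rv X -> nondegenerate_frv P X ->
  (forall u a, dir_set u -> unit_int a -> exists m, Med P (sX X u a) = [set m]) ->
  exists medSi : R -> R,
    [/\ isFc medSi,
        (forall u a, dir_set u -> unit_int a -> supf medSi u a = med P (sX X u a)),
        Med_s P X = [set medSi],
        Med_DFP P X = [set medSi]
      & [set med_Gr P X] = [set medSi]].
Proof.
move=> hX _ hU; exists (medSi P X); split.
- exact: medSi_Fc.
- exact: medSi_supf.
- exact: Med_s_medSi.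
- exact: Med_DFP_medSi.
- by rewrite med_Gr_medSi.
Qed.
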